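(* Let $P=[\alpha^1,\dots,\alpha^d,I]$ be a tile and let $q\in\mathcal{Q}_{d-1}$ with $q(x_I^j)\in\alpha^j$ for all $j\in\{1,\dots,d\}$. Then $$\|q-q_P\|_{L^\infty(\tilde I)}\le c(d)\,|I|^{-1},$$ where $c(d)$ depends only on $d$.
   Context: Fix $d\in\mathbb{N}$. $\mathcal{Q}_{d-1}$ is the class of real polynomials of degree $\le d-1$. A tile is a $(d+1)$-tuple $P=[\alpha^1,\dots,\alpha^d,I]$ of dyadic half-open intervals, $I$ a dyadic subinterval of $[0,1]$ and $\alpha^j$ dyadic intervals of $\mathbb{R}$, with $|\alpha^j|=|I|^{-1}$. For dyadic $I$, the points $x_I^1,\dots,x_I^d$ are: $x_I^1,x_I^2$ the endpoints of $I$, $x_I^3=\frac{x_I^1+x_I^2}{2}$, $x_I^4=\frac{x_I^1+x_I^3}{2}$, $x_I^5=\frac{x_I^3+x_I^2}{2}$, and so on inductively (successive dyadic midpoints, generation by generation, left to right) until $d$ distinct points are obtained. The central polynomial $q_P\in\mathcal{Q}_{d-1}$ is the Lagrange interpolation polynomial with $q_P(x_I^j)=c(\alpha^j)$ (the center of $\alpha^j$) for all $j$, i.e. $q_P(y)=\sum_{j=1}^d\frac{\prod_{k\ne j}(y-x_I^k)}{\prod_{k\ne j}(x_I^j-x_I^k)}c(\alpha^j)$. $\tilde I=13I$ is the interval with the same center as $I$ and length $13|I|$. *)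

From Stdlib Require Import Rdefinitions.
From HB Require Import structures.
From mathcomp Require Import all_boot all_order all_algebra.
From mathcomp Require Import Rstruct.
Set Implicit Arguments. Unset Strict Implicit. Unset Printing Implicit Defensive.
Import Order.TTheory GRing.Theory Num.Theory.
Local Open Scope ring_scope.

(* I = [k 2^-n, (k+1) 2^-n) with n : nat, k < 2^n  (a dyadic subinterval of [0,1]);
   alpha^j = [m_j 2^n, (m_j+1) 2^n) with m_j : int  (dyadic, |alpha^j| = |I|^-1). *)
Record tile (d : nat) := Tile {
  tile_n : nat;
  tile_k : nat;
  tile_k_lt : (tile_k < 2 ^ tile_n)%N;
  tile_m : 'I_d -> int }.

Definition I_len d (P : tile d) : R := (2%:R ^+ tile_n P)^-1.
Definition I_left d (P : tile d) : R := (tile_k P)%:R * I_len P.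
Definition alpha_len d (P : tile d) : R := 2%:R ^+ tile_n P.
Definition alpha_left d (P : tile d) (j : 'I_d) : R := (tile_m P j)%:~R * alpha_len P.
Definition alpha_center d (P : tile d) (j : 'I_d) : R :=
  alpha_left P j + alpha_len P / 2%:R.
Definition in_alpha d (P : tile d) (j : 'I_d) (x : R) : Prop :=
  alpha_left P j <= x /\ x < alpha_left P j + alpha_len P.

(* Relative position in [0,1] of the j-th (0-based) point of the sequence
   0, 1, 1/2, 1/4, 3/4, 1/8, 3/8, 5/8, 7/8, ...
   (endpoints, then successive dyadic midpoints generation by generation,
   left to right). *)
Definition dyad_frac (j : nat) : R :=
  match j with
  | 0%N => 0
  | 1%N => 1
  | j'.+2 =>
      let h := trunc_log 2 j'.+1 in
      let i := (j'.+1 - 2 ^ h)%N in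
      (2 * i + 1)%N%:R / (2 ^ h.+1)%N%:R
  end.

(* x_I^{j+1} = left(I) + dyad_frac j * |I| *)
Definition xpt d (P : tile d) (j : 'I_d) : R := I_left P + dyad_frac j * I_len P.

(* Central polynomial q_P: Lagrange interpolant with q_P(x_I^j) = c(alpha^j). *)
Definition qP d (P : tile d) : {poly R} :=
  \sum_(j < d)
    (\prod_(k < d | k != j) ('X - (xpt P k)%:P)) *
    ((alpha_center P j / \prod_(k < d | k != j) (xpt P j - xpt P k))%:P).

(* Dilated interval ~I = 13 I (closed; same center as I, length 13|I|). *)
Definition in_tildeI d (P : tile d) (y : R) : Prop :=
  `|y - (I_left P + I_len P / 2%:R)| <= 13%:R * I_len P / 2%:R.

From Pilot Require Import Defs.
From Stdlib Require Import Rdefinitions.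
From HB Require Import structures.
From mathcomp Require Import all_boot all_order all_algebra.
From mathcomp Require Import Rstruct.
From mathcomp Require Import zify ring lra.
Set Implicit Arguments. Unset Strict Implicit. Unset Printing Implicit Defensive.
Import Order.TTheory GRing.Theory Num.Theory.
Local Open Scope ring_scope.

(* The difference r = q - q_P has degree < d and |r(x_I^j)| <= |alpha^j|/2 = |I|^-1/2
   at the d nodes, so it is the Lagrange interpolant of these values.  After the
   affine change of variable y = left(I) + t|I| the nodes become the fixed, distinct
   dyadic fractions t_j in [0,1] and 13I becomes [-6, 7], so every Lagrange quotient
   |y - x_k| / |x_j - x_k| is at most 7 / |t_j - t_k|, a constant depending on d only. *)

Section LagrangeInterpolation.
Variables (F : fieldType) (d : nat) (x : 'I_d -> F).

Definition lagrange_basis (j : 'I_d) : {poly F} := \prod_(k < d | k != j) ('X - (x k)%:P).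

Definition lagrange_denom (j : 'I_d) : F := \prod_(k < d | k != j) (x j - x k).

Definition lagrange_interp (v : 'I_d -> F) : {poly F} :=
  \sum_(j < d) lagrange_basis j * (v j / lagrange_denom j)%:P.

Lemma horner_lagrange_basis j y :
  (lagrange_basis j).[y] = \prod_(k < d | k != j) (y - x k).
Proof. by rewrite horner_prod; apply: eq_bigr => k _; rewrite hornerXsubC. Qed.

Lemma size_lagrange_basis j : (size (lagrange_basis j) <= d)%N.
Proof.
rewrite size_prod => [|k _]; last by rewrite -size_poly_eq0 size_XsubC.
rewrite (eq_bigr (fun _ => 2%N)) => [|k _]; last by rewrite size_XsubC.
rewrite sum_nat_const cardC1 card_ord.
by have := ltn_ord j; lia.
Qed.

Lemma size_lagrange_interp v : (size (lagrange_interp v) <= d)%N.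
Proof.
rewrite /lagrange_interp; elim/big_ind: _ => [|p r sp sr|j _]; first by rewrite size_poly0.
  by apply: leq_trans (size_polyD _ _) _; rewrite geq_max sp sr.
rewrite mulrC mul_polyC.
exact: leq_trans (size_scale_leq _ _) (size_lagrange_basis j).
Qed.

Hypothesis x_inj : injective x.

Lemma lagrange_denom_neq0 j : lagrange_denom j != 0.
Proof.
apply/prodf_neq0 => k kj.
by rewrite subr_eq0; apply: contra kj => /eqP /x_inj ->.
Qed.

Lemma lagrange_interp_node v i : (lagrange_interp v).[x i] = v i.
Proof.
rewrite horner_sum (bigD1 i) //= big1 ?addr0 => [|j ji].
  rewrite hornerM hornerC horner_lagrange_basis mulrC mulrVK //.
  by rewrite unitfE lagrange_denom_neq0.
by rewrite hornerM horner_lagrange_basis (bigD1 i) 1?eq_sym //= subrr !mul0r.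
Qed.

Lemma lagrange_interpE (p : {poly F}) :
  (size p <= d)%N -> p = lagrange_interp (fun j => p.[x j]).
Proof.
move=> sp; apply/eqP; rewrite -subr_eq0; apply/eqP.
apply: (@roots_geq_poly_eq0 _ _ [seq x j | j <- enum 'I_d]).
- by apply/allP => _ /mapP[j _ ->]; rewrite /root !hornerE lagrange_interp_node subrr.
- by rewrite map_inj_uniq ?enum_uniq.
- rewrite size_map size_enum_ord; apply: leq_trans (size_polyD _ _) _.
  by rewrite size_polyN geq_max sp size_lagrange_interp.
Qed.

End LagrangeInterpolation.

Lemma norm_horner_lagrange_interp (F : numFieldType) d (x : 'I_d -> F) v y :
  `|(lagrange_interp x v).[y]| <=
    \sum_(j < d) `|v j| * \prod_(k < d | k != j) (`|y - x k| / `|x j - x k|).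
Proof.
rewrite horner_sum; apply: le_trans (ler_norm_sum _ _ _) _.
apply: ler_sum => j _.
rewrite hornerM hornerC horner_lagrange_basis normrM normf_div !normr_prod.
by rewrite prodf_div mulrCA mulrA.
Qed.

Lemma eq_odd_mul_pow2_exp (a b m n : nat) :
  ((2 * a + 1) * 2 ^ m = (2 * b + 1) * 2 ^ n)%N -> m = n.
Proof.
elim: m n => [|m IH] [|n] //; rewrite ?expn0 ?expnS.
- by set t := (2 ^ _)%N; nia.
- by set t := (2 ^ _)%N; nia.
by rewrite mulnCA [X in _ = X]mulnCA => /eqP; rewrite eqn_mul2l => /eqP /IH ->.
Qed.

Lemma dyad_frac_interior j : (1 < j)%N -> 0 < dyad_frac j < 1.
Proof.
case: j => [|[|j]] //= _.
set h := trunc_log 2 j.+1.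
have h2 : (j.+1 < 2 ^ h.+1)%N by apply: trunc_log_ltn.
have h1 : (2 ^ h <= j.+1)%N by apply: trunc_logP.
have p0 : 0 < (2 ^ h.+1)%N%:R :> R by rewrite ltr0n expn_gt0.
apply/andP; split; first by rewrite divr_gt0 // ltr0n // addn1.
rewrite ltr_pdivrMr // mul1r ltr_nat.
by rewrite expnS in h2 *; lia.
Qed.

Lemma dyad_frac_ge0_le1 j : 0 <= dyad_frac j <= 1.
Proof.
case: j => [|[|j]]; rewrite ?lexx ?ler01 //.
by have /andP[? ?] := @dyad_frac_interior j.+2 isT; rewrite !ltW.
Qed.

Lemma dyad_frac_inj : injective dyad_frac.
Proof.
have interior_neq01 j : (1 < j)%N -> dyad_frac j != 0 /\ dyad_frac j != 1.
  by move=> /dyad_frac_interior /andP[? ?]; rewrite gt_eqF // lt_eqF.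
case=> [|[|a]] [|[|b]] //.
- by move=> /esym/eqP; rewrite oner_eq0.
- by move=> E; have [] := interior_neq01 b.+2 isT; rewrite -E eqxx.
- by move=> /eqP; rewrite oner_eq0.
- by move=> E; have [] := interior_neq01 b.+2 isT; rewrite -E eqxx.
- by move=> E; have [] := interior_neq01 a.+2 isT; rewrite E eqxx.
- by move=> E; have [] := interior_neq01 a.+2 isT; rewrite E eqxx.
rewrite /=.
set ha := trunc_log 2 a.+1; set hb := trunc_log 2 b.+1.
have ha1 : (2 ^ ha <= a.+1)%N by apply: trunc_logP.
have hb1 : (2 ^ hb <= b.+1)%N by apply: trunc_logP.
move/eqP; rewrite eqr_div ?pnatr_eq0 ?expn_eq0 // -!natrM eqr_nat => /eqP E.
have Eh : ha = hb by apply/esym/succn_inj; apply: eq_odd_mul_pow2_exp E.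
move: E ha1; rewrite Eh => /eqP; rewrite eqn_mul2r expn_eq0 /= => /eqP E ha1.
by congr _.+2; lia.
Qed.

Section TileGeometry.
Variables (d : nat) (P : tile d).

Lemma I_len_gt0 : 0 < I_len P.
Proof. by rewrite invr_gt0 exprn_gt0 // ltr0n. Qed.

Lemma xpt_inj : injective (xpt P).
Proof.
move=> i j /addrI /(mulIf (lt0r_neq0 I_len_gt0)) /dyad_frac_inj.
exact: val_inj.
Qed.

Lemma xptB j k : xpt P j - xpt P k = (dyad_frac j - dyad_frac k) * I_len P.
Proof. by rewrite /xpt opprD addrACA subrr add0r mulrBl. Qed.

Lemma in_alpha_dist_center j z :
  in_alpha P j z -> `|z - alpha_center P j| <= (I_len P)^-1 / 2%:R.
Proof.
have -> : (I_len P)^-1 = alpha_len P by rewrite /I_len invrK.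
(* In Defs the [+] and [/] of [alpha_center], [xpt] and [in_tildeI] elaborate to Stdlib's
   [Rplus]/[Rdiv]; restating them by conversion exposes the ring operations to [lra]. *)
have -> : alpha_center P j = alpha_left P j + alpha_len P / 2%:R by [].
by case=> h1 h2; rewrite ler_norml; apply/andP; split; lra.
Qed.

Lemma in_tildeI_dist_xpt y k : in_tildeI P y -> `|y - xpt P k| <= 7 * I_len P.
Proof.
have /andP[t0 t1] := dyad_frac_ge0_le1 k; have L0 := I_len_gt0.
have tL0 : 0 <= dyad_frac k * I_len P by apply: mulr_ge0 t0 (ltW L0).
have tL1 : dyad_frac k * I_len P <= I_len P by apply: ler_piMl (ltW L0) t1.
move=> yI; have {yI} : `|y - (I_left P + I_len P / 2%:R)| <= 13%:R * I_len P / 2%:R := yI.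
have -> : xpt P k = I_left P + dyad_frac k * I_len P by [].
by rewrite !ler_norml => /andP[h1 h2]; apply/andP; split; lra.
Qed.

End TileGeometry.

Theorem lemmaC (d : nat) (hd : (0 < d)%N) :
  exists c : R, forall (P : tile d) (q : {poly R}),
    (size q <= d)%N ->
    (forall j : 'I_d, in_alpha P j q.[xpt P j]) ->
    forall y : R, in_tildeI P y ->
      `|q.[y] - (qP P).[y]| <= c * (I_len P)^-1.
Proof.
pose t (j : 'I_d) := dyad_frac j.
exists (\sum_(j < d) 2%:R^-1 * \prod_(k < d | k != j) (7 / `|t j - t k|)).
move=> P q sq q_alpha y yI; set L := I_len P; have L0 : 0 < L := @I_len_gt0 _ P.
have qPE : qP P = lagrange_interp (xpt P) (alpha_center P) by [].
set r := q - qP P.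
have sr : (size r <= d)%N.
  apply: leq_trans (size_polyD _ _) _.
  by rewrite size_polyN geq_max sq qPE size_lagrange_interp.
have r_node j : `|r.[xpt P j]| <= L^-1 / 2%:R.
  by rewrite !hornerE qPE lagrange_interp_node ?in_alpha_dist_center //; apply: xpt_inj.
have -> : q.[y] - (qP P).[y] = r.[y] by rewrite !hornerE.
rewrite (lagrange_interpE (@xpt_inj _ P) sr) mulr_suml.
apply: le_trans (norm_horner_lagrange_interp _ _ _) _.
apply: ler_sum => j _; rewrite mulrAC [2%:R^-1 * _]mulrC.
apply: ler_pM => //; first by apply: prodr_ge0 => k _; rewrite divr_ge0.
apply: ler_prod => k kj; rewrite divr_ge0 //=.
have tjk : 0 < `|t j - t k|.
  by rewrite normr_gt0 subr_eq0; apply: contra kj => /eqP /dyad_frac_inj /val_inj ->.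
rewrite xptB normrM (gtr0_norm L0) ler_pdivrMr ?mulr_gt0 // mulrA mulfVK ?lt0r_neq0 //.
exact: in_tildeI_dist_xpt.
Qed.
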